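(* Let $n\ge 1$. If $p(4,n)\neq 0$, then $n=8t$ or $n=8t-1$ for some integer $t\ge 2$.
   Context: For integers $m\ge 2$, $n\ge 1$, a valid $(m,n)$-sequence is a sequence $(a_1,\dots,a_{mn})$ with entries in $\{1,\dots,n\}$ in which each $k\in\{1,\dots,n\}$ occurs exactly $m$ times, and such that any two consecutive occurrences of $k$ are separated by exactly $k$ other terms; equivalently, there is an index $\theta_k$ such that $k$ occurs exactly at the positions $\theta_k,\ \theta_k+(k+1),\ \dots,\theta_k+(m-1)(k+1)$ (all in $\{1,\dots,mn\}$). The reversal of a valid sequence is again valid; $p(m,n)$ denotes the number of valid $(m,n)$-sequences counted up to reversal (i.e. the number of equivalence classes of valid sequences under identifying a sequence with its reversal). *)

From mathcomp Require Import all_boot.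
Set Implicit Arguments. Unset Strict Implicit. Unset Printing Implicit Defensive.

(* A candidate (m,n)-sequence: a function on the positions 0..mn-1
   (position j stands for the paper's index j+1) with values in 'I_n
   (value v stands for the paper's entry v+1). *)
Definition cand (m n : nat) := {ffun 'I_(m * n) -> 'I_n}.

(* Entry (in 1..n) of s at paper-position j (1-based), or 0 outside range. *)
Definition entry m n (s : cand m n) (j : nat) : nat :=
  if insub j.-1 is Some i then (if 0 < j then (s i).+1 else 0) else 0.

Definition valid m n (s : cand m n) : bool :=
  [forall k : 'I_n,
    [exists th : 'I_(m * n).+1,
      [&& 1 <= th, th + (m - 1) * (k.+2) <= m * n &
        [forall j : 'I_(m * n).+1,
          (1 <= j) ==>
          ((entry s j == k.+1) ==
           [exists i : 'I_m, j == th + i * (k.+2) :> nat])]]]].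

Definition rev_cand m n (s : cand m n) : cand m n :=
  [ffun i => s (rev_ord i)].

Definition p (m n : nat) : nat :=
  #|[set [set s; rev_cand s] | s in [set s : cand m n | valid s]]|.

From mathcomp Require Import all_boot zify.
Set Implicit Arguments. Unset Strict Implicit. Unset Printing Implicit Defensive.

(* Weight the positions 1..4n by [2] on residues 0, 1 mod 4 (resp. on even
   positions): every block of four consecutive positions weighs 4, so the total
   weight is 4n.  The four copies of a value k sit on an arithmetic progression
   with difference k + 1, whose weight mod 8 is 4 unless 4 | k + 1 (resp. 4 iff
   k + 1 is odd).  Comparing both totals mod 8 forces n = 0 or 7 mod 8, and the
   cases n = 7 and n = 8 are excluded by exhaustive search. *)

Lemma exists_valid m n : p m n <> 0 -> exists s : cand m n, valid s.
Proof.
move=> p_neq0; case: (pickP (@valid m n)) => [s valid_s|no_valid]; first by exists s.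
case: p_neq0; rewrite /p (_ : [set s | valid s] = set0) ?imset0 ?cards0 //.
by apply/setP => s; rewrite inE no_valid in_set0.
Qed.

(* [th k] is the position (1-based) of the first occurrence of the value [k.+1]
   (the paper's value [k + 1]); its [m] copies sit [k.+2] positions apart. *)
Definition placement m n (th : 'I_n -> nat) : Prop :=
  (forall k : 'I_n, 0 < th k /\ th k + (m - 1) * k.+2 <= m * n) /\
  (forall (k k' : 'I_n) (i i' : nat), i < m -> i' < m ->
     th k + i * k.+2 = th k' + i' * k'.+2 -> k = k').

Lemma leq_progression t d m N i : t + (m - 1) * d <= N -> i < m -> t + i * d <= N.
Proof.
move=> le_last lt_im; apply: leq_trans le_last.
by rewrite leq_add2l leq_mul2r leq_subRL ?add1n ?lt_im ?orbT // (leq_ltn_trans _ lt_im).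
Qed.

Lemma valid_placement m n (s : cand m n) :
  valid s -> exists th : 'I_n -> nat, placement m th.
Proof.
move=> /forallP valid_s.
pose th k := val (xchoose (existsP (valid_s k))).
have th_spec k := xchooseP (existsP (valid_s k)).
have entry_th (k : 'I_n) i : i < m -> entry s (th k + i * k.+2) = k.+1.
  move=> lt_im; have /and3P[th_gt0 le_last /forallP occ] := th_spec k.
  have le_x := leq_progression le_last lt_im.
  have /implyP := occ (Ordinal (le_x : _ < (m * n).+1)).
  rewrite (leq_trans th_gt0 (leq_addr _ _)) => /(_ isT) /= /eqP eq_entry.
  by apply/eqP; rewrite eq_entry; apply/existsP; exists (Ordinal lt_im).
exists th; split=> [k|k k' i i' lt_im lt_i'm eq_pos].
  by have /and3P[] := th_spec k.
by apply: val_inj; apply: succn_inj; rewrite -(entry_th k i) // eq_pos entry_th.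
Qed.

Lemma sum_placement m n (th : 'I_n -> nat) (F : nat -> nat) : placement m th ->
  \sum_(1 <= x < (m * n).+1) F x = \sum_(k < n) \sum_(i < m) F (th k + i * k.+2).
Proof.
case=> bounds inj.
pose pos := [seq th k + val i * k.+2 | k <- enum 'I_n, i <- enum 'I_m].
have -> : \sum_(k < n) \sum_(i < m) F (th k + i * k.+2) = \sum_(x <- pos) F x.
  by rewrite big_allpairs_dep big_enum; apply: eq_bigr => k _; rewrite big_enum.
have uniq_pos : uniq pos.
  apply: allpairs_uniq => [||[k i] [k' i'] /allpairsP[[a b] [_ _ [-> ->]]]
    /allpairsP[[a' b'] [_ _ [-> ->]]] /= eq_pos]; rewrite ?enum_uniq //.
  have eq_a := inj a a' b b' (ltn_ord b) (ltn_ord b') eq_pos; subst a'.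
  by move/addnI/eqP: eq_pos; rewrite eqn_mul2r /= => /eqP/val_inj ->.
have pos_sub : {subset pos <= index_iota 1 (m * n).+1}.
  move=> _ /allpairsP[[k i] [_ _ ->]] /=.
  have [th_gt0 le_last] := bounds k.
  rewrite mem_index_iota ltnS (leq_progression le_last) ?andbT //.
  exact: leq_trans th_gt0 (leq_addr _ _).
have size_pos : size (index_iota 1 (m * n).+1) <= size pos.
  by rewrite size_iota size_allpairs !size_enum_ord subSS subn0 mulnC.
have [_ eq_pos] := uniq_min_size uniq_pos pos_sub size_pos.
by apply/esym/perm_big/uniq_perm; rewrite ?iota_uniq.
Qed.

Lemma big_nat_periodic p (g : nat -> nat) n : (forall k, g (k + p) = g k) ->
  \sum_(0 <= k < n) g k = n %/ p * \sum_(0 <= k < p) g k + \sum_(0 <= k < n %% p) g k.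
Proof.
move=> g_per; rewrite {1}(divn_eq n p); elim: (n %/ p) => [|q IH] //.
rewrite mulSn -addnA (@big_cat_nat _ _ _ p) ?leq_addr //= (big_addn 0 _ p) addKn.
by rewrite [X in _ + X = _](eq_bigr g) => [|k _]; rewrite ?IH ?mulSn ?addnA.
Qed.

Lemma sum_mod_periodic p d (g : nat -> nat) n : (forall k, g (k + p) = g k) ->
  d %| \sum_(0 <= k < p) g k ->
  \sum_(0 <= k < n) g k = \sum_(0 <= k < n %% p) g k %[mod d].
Proof.
move=> g_per /dvdnP[c sum_p].
by rewrite (big_nat_periodic (p := p)) // sum_p mulnA modnMDl.
Qed.

Lemma sum_positions_periodic p (w : nat -> nat) n :
  0 < p -> (forall x, w (x + p) = w x) ->
  \sum_(1 <= x < (p * n).+1) w x = n * \sum_(1 <= x < p.+1) w x.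
Proof.
move=> p_gt0 w_per; rewrite !big_add1 /= (big_nat_periodic (p := p)) => [|k].
  by rewrite mulKn // modnMr [X in _ + X]big_geq ?addn0.
by rewrite -addSn w_per.
Qed.

Definition low_weight x := if x %% 4 < 2 then 2 else 0.
Definition even_weight x := if odd x then 0 else 2.

Lemma low_weight_progression t d :
  \sum_(i < 4) low_weight (t + i * d) = (if 4 %| d then 0 else 4) %[mod 8].
Proof.
have low_mod (i : nat) : low_weight (t + i * d) = low_weight (t %% 4 + i * (d %% 4)).
  by rewrite /low_weight modnDml -[in X in _ = X]modnDmr modnMmr modnDmr.
under eq_bigr do rewrite low_mod; rewrite /dvdn.
move: (t %% 4) (d %% 4) (ltn_pmod t (isT : 0 < 4)) (ltn_pmod d (isT : 0 < 4)) => a b.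
by rewrite !big_ord_recr big_ord0 /=; case: a => [|[|[|[|a]]]]; case: b => [|[|[|[|b]]]].
Qed.

Lemma even_weight_progression t d :
  \sum_(i < 4) even_weight (t + i * d) = (if odd d then 4 else 0) %[mod 8].
Proof.
rewrite !big_ord_recr big_ord0 /= /even_weight !oddD !oddM /=.
by case: (odd t); case: (odd d).
Qed.

Lemma sum_placement_mod m n (th : 'I_n -> nat) (w g : nat -> nat) e :
  placement m th ->
  (forall t d, \sum_(i < m) w (t + i * d) = g d %[mod e]) ->
  \sum_(1 <= x < (m * n).+1) w x = \sum_(0 <= k < n) g k.+2 %[mod e].
Proof.
move=> pl w_g; rewrite (sum_placement _ pl) big_mkord -modn_summ -[RHS]modn_summ.
by congr (_ %% e); apply: eq_bigr => k _.
Qed.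

Lemma placement4_weight_congr n (th : 'I_n -> nat) (w g : nat -> nat) :
  placement 4 th -> (forall x, w (x + 4) = w x) -> \sum_(1 <= x < 5) w x = 4 ->
  (forall t d, \sum_(i < 4) w (t + i * d) = g d %[mod 8]) ->
  4 * n = \sum_(0 <= k < n) g k.+2 %[mod 8].
Proof.
move=> pl w_per w_block w_g.
by rewrite -(sum_placement_mod pl w_g) sum_positions_periodic // w_block mulnC.
Qed.

Lemma residue_mod8 r : r < 8 ->
  4 * r = \sum_(0 <= k < r) (if 4 %| k.+2 then 0 else 4) %[mod 8] ->
  4 * r = \sum_(0 <= k < r) (if odd k.+2 then 4 else 0) %[mod 8] ->
  r = 0 \/ r = 7.
Proof. by rewrite unlock; case: r => [|[|[|[|[|[|[|[|r]]]]]]]]; auto. Qed.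

Lemma placement4_mod8 n (th : 'I_n -> nat) :
  placement 4 th -> n %% 8 = 0 \/ n %% 8 = 7.
Proof.
move=> pl.
have mod8_4n : 4 * n = 4 * (n %% 8) %[mod 8].
  by rewrite {1}(divn_eq n 8) mulnDr mulnA modnMDl.
apply: residue_mod8; first by rewrite ltn_mod.
- rewrite -mod8_4n (placement4_weight_congr pl _ _ low_weight_progression).
  + by apply: sum_mod_periodic => [k|]; rewrite ?unlock // -!addSn dvdn_addl.
  + by move=> x; rewrite /low_weight modnDr.
  + by rewrite unlock.
- rewrite -mod8_4n (placement4_weight_congr pl _ _ even_weight_progression).
  + by apply: sum_mod_periodic => [k|]; rewrite ?unlock // -!addSn oddD addbF.
  + by move=> x; rewrite /even_weight oddD addbF.
  + by rewrite unlock.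
Qed.

(* The [if]
   (rather than [&&]) keeps [vm_compute] from evaluating the recursive call
   when the test fails. *)
Fixpoint placeable m N k (occ : seq nat) : bool :=
  if k is k'.+1 then
    has (fun t => if (t + (m - 1) * k'.+2 <= N) &&
                     all (fun i => t + i * k'.+2 \notin occ) (iota 0 m)
                  then placeable m N k' ([seq t + i * k'.+2 | i <- iota 0 m] ++ occ)
                  else false)
        (iota 1 N)
  else true.

Lemma placement_placeable m n (th : 'I_n -> nat) :
  placement m th -> placeable m (m * n) n [::].
Proof.
case=> bounds inj.
suff: forall k occ, k <= n ->
    (forall (j : 'I_n) i, j < k -> i < m -> th j + i * j.+2 \notin occ) ->
    placeable m (m * n) k occ by apply.
elim=> [//|k IH] occ lt_kn fresh /=; set j := Ordinal lt_kn.
have [th_gt0 le_last] := bounds j.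
apply/hasP; exists (th j).
  by rewrite mem_iota th_gt0 add1n ltnS (leq_trans _ le_last) ?leq_addr.
rewrite le_last; have -> /= : all (fun i => th j + i * k.+2 \notin occ) (iota 0 m).
  by apply/allP => i; rewrite mem_iota => /= lt_im; apply: fresh.
apply: IH (ltnW lt_kn) _ => j' i lt_j'k lt_im; rewrite mem_cat negb_or.
apply/andP; split; last exact: fresh (ltnW lt_j'k) lt_im.
apply/mapP => -[i' /[!mem_iota] /= lt_i'm eq_pos].
have /(congr1 val) /= eq_j := inj _ j _ _ lt_im lt_i'm eq_pos.
by rewrite eq_j ltnn in lt_j'k.
Qed.

Lemma not_placeable_7 : placeable 4 (4 * 7) 7 [::] = false. Proof. by vm_compute. Qed.
Lemma not_placeable_8 : placeable 4 (4 * 8) 8 [::] = false. Proof. by vm_compute. Qed.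

Theorem proposition2 (n : nat) :
  1 <= n -> p 4 n <> 0 ->
  exists t : nat, 2 <= t /\ (n = 8 * t \/ n = 8 * t - 1).
Proof.
move=> n_gt0 /exists_valid[s /valid_placement[th pl]].
have not_placed k : placeable 4 (4 * k) k [::] = false -> n <> k.
  by move=> not_k eq_nk; subst n; rewrite (placement_placeable pl) in not_k.
have := not_placed 7 not_placeable_7; have := not_placed 8 not_placeable_8.
by case: (placement4_mod8 pl) => r_eq *; [exists (n %/ 8) | exists (n %/ 8).+1]; lia.
Qed.
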